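(* Let $\phi$ be a monotone Boolean formula in the variables $x_1,\dots,x_n$ defining a set $S \subseteq \{0,1\}^n$, and let $Q \subseteq [0,1]^n$ be any convex set containing $S$. If $Q$ satisfies all monotone inequalities of pitch at most $p$ that are valid for $S$, then $\phi(Q)$ satisfies all monotone inequalities of pitch at most $p+1$ that are valid for $S$. Moreover, if $Q$ is a polytope defined by an extended formulation of size $\sigma$, then $\phi(Q)$ is a polytope that can be defined by an extended formulation of size $|\phi|\sigma$.
   Context: Boolean formulas are built from input variables $x_1,\dots,x_n$ using $\wedge$, $\vee$, $\neg$, and interpreted as functions $\{0,1\}^n\to\{0,1\}$; $\phi$ defines $S=\{x\in\{0,1\}^n:\phi(x)=1\}$. A formula is monotone if it contains no negations. The size $|\phi|$ is the total number of occurrences of input variables. For such $\phi$ and a convex $Q\subseteq[0,1]^n$, $\phi(Q)$ is defined recursively: a variable $x_i$ is replaced by $\{x \in Q : x_i = 1\}$ (a negated $\neg x_i$, if present, by $\{x\in Q: x_i=0\}$); a conjunction by the intersection of the corresponding sets; a disjunction by the convex hull of the union of the corresponding sets. A monotone inequality in standard form is $\sum_{i \in I^+} c_i x_i \ge \delta$ with $I^+\subseteq[n]$, $c_i \ge 0$, $\delta \ge 0$. Its pitch is the smallest number $p$ such that $\sum_{j\in J} c_j \ge \delta$ for every $J \subseteq \operatorname{supp}(c)$ with $|J|\ge p$. An extended formulation of size $m$ of a polytope $P\subseteq\mathbb{R}^n$ is a description $P=\{x:\exists y\in\mathbb{R}^d,\ Ay\ge b,\ x=Ty+t\}$ with $A$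 having $m$ rows. *)

(* Points of R^n are column vectors 'cV[R]_n; coordinate i of x is x i 0. *)
From HB Require Import structures.
From mathcomp Require Import all_boot all_order all_algebra.
Set Implicit Arguments. Unset Strict Implicit. Unset Printing Implicit Defensive.
Import Order.TTheory GRing.Theory Num.Theory.
Local Open Scope ring_scope.

Inductive mformula (n : nat) : Type :=
  | FVar of 'I_n
  | FAnd of mformula n & mformula n
  | FOr of mformula n & mformula n.

Fixpoint feval n (f : mformula n) (b : 'I_n -> bool) : bool :=
  match f with
  | FVar i => b i
  | FAnd f1 f2 => feval f1 b && feval f2 b
  | FOr f1 f2 => feval f1 b || feval f2 b
  end.

Fixpoint fsize n (f : mformula n) : nat :=
  match f with
  | FVar _ => 1%N
  | FAnd f1 f2 => (fsize f1 + fsize f2)%N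
  | FOr f1 f2 => (fsize f1 + fsize f2)%N
  end.

Section Geometry.
Variables (R : realFieldType) (n : nat).
Local Notation pt := 'cV[R]_n.

Definition binary_point (x : pt) : Prop := forall i, x i 0 = 0 \/ x i 0 = 1.

Definition fset_of (f : mformula n) : pt -> Prop :=
  fun x => binary_point x /\ feval f (fun i => x i 0 == 1).

Definition unit_cube : pt -> Prop := fun x => forall i, 0 <= x i 0 <= 1.

Definition convex (Q : pt -> Prop) : Prop :=
  forall x y (t : R), Q x -> Q y -> 0 <= t <= 1 -> Q (t *: x + (1 - t) *: y).

Definition conv (A : pt -> Prop) : pt -> Prop :=
  fun x => exists (k : nat) (lam : 'I_k -> R) (pts : 'I_k -> pt),
    [/\ (forall j, 0 <= lam j), \sum_j lam j = 1, (forall j, A (pts j))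
      & x = \sum_j lam j *: pts j].

Fixpoint fapply (f : mformula n) (Q : pt -> Prop) : pt -> Prop :=
  match f with
  | FVar i => fun x => Q x /\ x i 0 = 1
  | FAnd f1 f2 => fun x => fapply f1 Q x /\ fapply f2 Q x
  | FOr f1 f2 => conv (fun x => fapply f1 Q x \/ fapply f2 Q x)
  end.

(* Monotone inequality in standard form  sum_i c_i x_i >= delta,
   with c_i >= 0 (I^+ = supp c) and delta >= 0. *)
Definition monotone_ineq (c : pt) (delta : R) : Prop :=
  (forall i, 0 <= c i 0) /\ 0 <= delta.

Definition ineq_lhs (c x : pt) : R := \sum_i c i 0 * x i 0.

Definition supp (c : pt) : {set 'I_n} := [set i | c i 0 != 0].

Definition pitch_cond (c : pt) (delta : R) (p : nat) : bool :=
  [forall J : {set 'I_n},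
     ((J \subset supp c) && (p <= #|J|)%N) ==> (delta <= \sum_(j in J) c j 0)].

Lemma pitch_exists (c : pt) (delta : R) : exists p, pitch_cond c delta p.
Proof.
exists n.+1; apply/forallP => J; apply/implyP => /andP [_ H].
have := max_card J; rewrite card_ord => H2.
by move: (leq_trans H H2); rewrite ltnn.
Qed.

Definition pitch (c : pt) (delta : R) : nat := ex_minn (pitch_exists c delta).

Definition valid_for (A : pt -> Prop) (c : pt) (delta : R) : Prop :=
  forall x, A x -> delta <= ineq_lhs c x.

Definition satisfies_pitch (Q S : pt -> Prop) (p : nat) : Prop :=
  forall c delta, monotone_ineq c delta -> (pitch c delta <= p)%N ->
    valid_for S c delta -> valid_for Q c delta.

Definition ext_formulation (P : pt -> Prop) (m : nat) : Prop :=
  exists (d : nat) (A : 'M[R]_(m, d)) (b : 'cV[R]_m) (T : 'M[R]_(n, d)) (t : pt),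
    forall x, P x <-> exists y : 'cV[R]_d,
      (forall i, b i 0 <= (A *m y) i 0) /\ x = T *m y + t.

Definition polytope (P : pt -> Prop) : Prop :=
  exists (k : nat) (pts : 'I_k -> pt),
    forall x, P x <-> conv (fun z => exists j, z = pts j) x.

End Geometry.

(* For the pitch bound, take a valid monotone inequality [c x >= d] with
   [d > 0] and pitch at most [p + 1].  It is violated at the 0/1 point with
   support the zero set of [c], so [supp c] meets every satisfying assignment
   of [phi]; then an induction on [phi] (a conjunction needs one side, a
   disjunction both, and convex hulls preserve valid inequalities) reduces the
   claim to the faces [Q /\ x_i = 1] with [c_i > 0].  On such a face either
   [c_i >= d], or deleting [x_i] leaves an inequality with right-hand side
   [d - c_i], pitch at most [p] and still valid for [S], hence for [Q].
   For the size bound, homogenizing the extended formulation of [Q] presents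
   each face as a slice of a polyhedral cone with [sigma] inequalities plus
   equations; intersections and convex hulls of unions are presented by
   block-diagonal cones (Balas), so only the inequality counts add up, and the
   equations are eliminated at the end.  Boundedness makes every such
   projection a polytope. *)

From mathcomp Require Import all_boot all_order all_algebra.
From mathcomp Require Import ring lra zify.
From Stdlib Require Import Classical_Prop.
Set Implicit Arguments. Unset Strict Implicit. Unset Printing Implicit Defensive.
Import Order.TTheory GRing.Theory Num.Theory.
Local Open Scope ring_scope.

Lemma split_lshift m k (j : 'I_m) : split (lshift k j) = inl j.
Proof. exact: (unsplitK (inl j)). Qed.

Lemma split_rshift m k (j : 'I_k) : split (rshift m j) = inr j.
Proof. exact: (unsplitK (inr j)). Qed.

Section ConvexHull.
Variables (R : realFieldType) (n : nat).
Local Notation pt := 'cV[R]_n.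

Lemma conv_sub (A : pt -> Prop) x : A x -> conv A x.
Proof.
move=> Ax; exists 1%N, (fun _ => 1), (fun _ => x); split.
- by move=> _; apply: ler01.
- by rewrite big_ord1.
- by [].
- by rewrite big_ord1 scale1r.
Qed.

Lemma conv_convex (A : pt -> Prop) : convex (conv A).
Proof.
move=> _ _ a [k1 [l1 [p1 [l1_ge0 l1_sum p1A ->]]]] [k2 [l2 [p2 [l2_ge0 l2_sum p2A ->]]]].
move=> /andP [a_ge0 a_le1].
exists (k1 + k2)%N,
  (fun j => match split j with inl j1 => a * l1 j1 | inr j2 => (1 - a) * l2 j2 end),
  (fun j => match split j with inl j1 => p1 j1 | inr j2 => p2 j2 end).
split.
- by move=> j; case: split => j'; apply: mulr_ge0 => //; rewrite subr_ge0.
- rewrite big_split_ord /=.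
  under eq_bigr => j _ do rewrite split_lshift.
  under [X in _ + X]eq_bigr => j _ do rewrite split_rshift.
  by rewrite -!mulr_sumr l1_sum l2_sum; ring.
- by move=> j; case: split.
- symmetry; rewrite big_split_ord /=.
  under eq_bigr => j _ do rewrite split_lshift.
  under [X in _ + X]eq_bigr => j _ do rewrite split_rshift.
  by rewrite !scaler_sumr; congr (_ + _); apply: eq_bigr => j _; rewrite scalerA.
Qed.

Lemma conv_singleton (A : pt -> Prop) c :
  (forall x, A x <-> x = c) -> forall x, conv A x <-> x = c.
Proof.
move=> Ac x; split => [|->]; last exact/conv_sub/Ac.
case=> k [lam [pts [_ lam_sum ptsA ->]]].
rewrite (eq_bigr (fun j => lam j *: c)) => [|j _]; last by move: (ptsA j) => /Ac ->.
by rewrite -scaler_suml lam_sum scale1r.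
Qed.

Lemma conv_scaled_sum (A : pt -> Prop) (s1 s2 : R) (x1 x2 : pt) :
  0 <= s1 -> 0 <= s2 -> 0 < s1 + s2 -> (s1 = 0 -> x1 = 0) -> (s2 = 0 -> x2 = 0) ->
  (0 < s1 -> A (s1^-1 *: x1)) -> (0 < s2 -> A (s2^-1 *: x2)) ->
  conv A ((s1 + s2)^-1 *: (x1 + x2)).
Proof.
move=> s1_ge0 s2_ge0 s_gt0 x1_0 x2_0 Ax1 Ax2.
move: s1_ge0 s2_ge0 s_gt0; rewrite !le_eqVlt.
case/orP => [/eqP s1E|s1_gt0] /orP [/eqP s2E|s2_gt0] s_gt0.
- by move: s_gt0; rewrite -s1E -s2E addr0 ltxx.
- by rewrite -s1E add0r x1_0 // add0r; apply/conv_sub/Ax2.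
- by rewrite -s2E addr0 x2_0 // addr0; apply/conv_sub/Ax1.
have a01 : 0 <= s1 / (s1 + s2) <= 1 by rewrite divr_ge0 ?ler_pdivrMr /=; lra.
have := conv_convex (conv_sub (Ax1 s1_gt0)) (conv_sub (Ax2 s2_gt0)) a01.
congr (conv _ _); apply/matrixP => i j; rewrite !mxE.
by field; rewrite !gt_eqF.
Qed.

Lemma conv_unit_cube (A : pt -> Prop) :
  (forall y, A y -> unit_cube y) -> forall x, conv A x -> unit_cube x.
Proof.
move=> A01 _ [k [lam [pts [lam_ge0 lam_sum ptsA ->]]]] i.
rewrite summxE; apply/andP; split.
  apply: sumr_ge0 => j _; rewrite mxE; apply: mulr_ge0 => //.
  by case/andP: (A01 _ (ptsA j) i).
rewrite -lam_sum; apply: ler_sum => j _; rewrite mxE.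
case/andP: (A01 _ (ptsA j) i) => _ pts_le1.
by rewrite -[X in _ <= X]mulr1; apply: ler_wpM2l.
Qed.

Lemma fapply_unit_cube (f : mformula n) (Q : pt -> Prop) :
  (forall y, Q y -> unit_cube y) -> forall x, fapply f Q x -> unit_cube x.
Proof.
move=> Q01; elim: f => [i|f1 IH1 f2 IH2|f1 IH1 f2 IH2] x /=.
- by case=> /Q01.
- by case=> /IH1.
- by apply: conv_unit_cube => y [/IH1|/IH2].
Qed.

End ConvexHull.

Section Pitch.
Variables (R : realFieldType) (n : nat).
Local Notation pt := 'cV[R]_n.

Lemma pitchP (c : pt) d : pitch_cond c d (pitch c d).
Proof. by rewrite /pitch; case: ex_minnP. Qed.

Lemma pitch_min (c : pt) d q : pitch_cond c d q -> (pitch c d <= q)%N.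
Proof. by rewrite /pitch; case: ex_minnP => m _; apply. Qed.

Lemma eq_feval (f : mformula n) b1 b2 : b1 =1 b2 -> feval f b1 = feval f b2.
Proof. by move=> eqb; elim: f => [i|f1 IH1 f2 IH2|f1 IH1 f2 IH2] /=; rewrite ?IH1 ?IH2. Qed.

Lemma ineq_lhs_conv k (c : pt) (lam : 'I_k -> R) (pts : 'I_k -> pt) :
  ineq_lhs c (\sum_j lam j *: pts j) = \sum_j lam j * ineq_lhs c (pts j).
Proof.
rewrite /ineq_lhs.
under eq_bigr => i _ do rewrite summxE mulr_sumr.
rewrite exchange_big /=; apply: eq_bigr => j _.
by rewrite mulr_sumr; apply: eq_bigr => i _; rewrite mxE; ring.
Qed.

Lemma ineq_lhs_ge0 (c x : pt) :
  (forall i, 0 <= c i 0) -> unit_cube x -> 0 <= ineq_lhs c x.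
Proof.
move=> c_ge0 x01; apply: sumr_ge0 => i _; apply: mulr_ge0 => //.
by case/andP: (x01 i).
Qed.

Lemma valid_for_conv (A : pt -> Prop) c d :
  valid_for A c d -> valid_for (conv A) c d.
Proof.
move=> A_valid _ [k [lam [pts [lam_ge0 lam_sum ptsA ->]]]].
rewrite ineq_lhs_conv -[d]mul1r -lam_sum mulr_suml; apply: ler_sum => j _.
exact/ler_wpM2l/A_valid.
Qed.

Definition face (Q : pt -> Prop) (i : 'I_n) : pt -> Prop :=
  fun x => Q x /\ x i 0 = 1.

(* As [f] is monotone, the second hypothesis says that [supp c] meets every
   satisfying assignment of [f]. *)
Lemma fapply_valid (f : mformula n) (Q : pt -> Prop) (c : pt) d :
  (forall i, c i 0 != 0 -> valid_for (face Q i) c d) ->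
  ~~ feval f (fun i => c i 0 == 0) -> valid_for (fapply f Q) c d.
Proof.
move=> faces_valid; elim: f => [i|f1 IH1 f2 IH2|f1 IH1 f2 IH2] /=.
- exact: faces_valid.
- by rewrite negb_and => /orP [/IH1 valid|/IH2 valid] x [f1x f2x]; apply: valid.
- rewrite negb_or => /andP [/IH1 valid1 /IH2 valid2].
  by apply: valid_for_conv => x [/valid1|/valid2].
Qed.

Lemma fset_of_transversal (f : mformula n) (c : pt) d :
  0 < d -> valid_for (fset_of f) c d -> ~~ feval f (fun i => c i 0 == 0).
Proof.
move=> d_gt0 S_valid; apply/negP => f_zeros.
pose z : pt := \col_i (if c i 0 == 0 then 1 else 0).
have Sz : fset_of f z.
  split; first by move=> i; rewrite mxE; case: ifP; [right|left].
  rewrite (eq_feval _ (b2 := fun i => c i 0 == 0)) // => i.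
  by rewrite mxE; case: ifP => _; rewrite ?eqxx // eq_sym oner_eq0.
have := S_valid z Sz; rewrite /ineq_lhs big1 => [|i _]; first by rewrite leNgt d_gt0.
by rewrite mxE; case: ifP => [/eqP ->|]; rewrite ?mul0r ?mulr0.
Qed.

Definition drop_coord (c : pt) (i : 'I_n) : pt :=
  \col_j (if j == i then 0 else c j 0).

Lemma ineq_lhs_drop_coord (c x : pt) i :
  ineq_lhs c x = ineq_lhs (drop_coord c i) x + c i 0 * x i 0.
Proof.
rewrite /ineq_lhs (bigD1 i) //= [in RHS](bigD1 i) //= !mxE eqxx mul0r add0r addrC.
by congr (_ + _); apply: eq_bigr => j /negbTE ji; rewrite mxE ji.
Qed.

Lemma pitch_drop_coord (c : pt) d p i : c i 0 != 0 ->
  (pitch c d <= p.+1)%N -> (pitch (drop_coord c i) (d - c i 0%R) <= p)%N.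
Proof.
move=> ci_neq0 pitch_le; apply: pitch_min; apply/forallP => J.
apply/implyP => /andP [/subsetP J_supp p_le].
have iNJ : i \notin J by apply/negP => /J_supp; rewrite inE mxE eqxx eqxx.
have iJ_supp : i |: J \subset supp c.
  rewrite subUset sub1set inE ci_neq0; apply/subsetP => j /J_supp.
  by rewrite !inE mxE; case: (j == i); rewrite ?eqxx.
have := pitchP c d => /forallP /(_ (i |: J)) /implyP.
rewrite iJ_supp cardsU1 iNJ add1n /=.
move=> /(_ (leq_trans pitch_le (p_le : (p < #|J|.+1)%N))).
rewrite (bigD1 i) ?setU11 //= lerBlDl => /le_trans; apply.
rewrite lerD2l le_eqVlt; apply/orP; left; apply/eqP; apply: eq_big => j.
  by rewrite !inE; have [->|_] := eqVneq j i; rewrite ?(negbTE iNJ) ?andbT.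
by move=> /andP [_ /negbTE ji]; rewrite mxE ji.
Qed.

Lemma valid_for_drop_coord (A : pt -> Prop) (c : pt) d i :
  (forall j, 0 <= c j 0) -> (forall x, A x -> unit_cube x) ->
  valid_for A c d -> valid_for A (drop_coord c i) (d - c i 0).
Proof.
move=> c_ge0 A01 A_valid x Ax; have := A_valid x Ax; rewrite (ineq_lhs_drop_coord c x i).
have /andP [_ xi_le1] := A01 x Ax i.
have : c i 0 * x i 0 <= c i 0 by rewrite -[leRHS]mulr1; apply: ler_wpM2l.
lra.
Qed.

Lemma face_valid (Q S : pt -> Prop) p (c : pt) d i :
  (forall x, S x -> unit_cube x) -> (forall x, Q x -> unit_cube x) ->
  satisfies_pitch Q S p -> monotone_ineq c d -> (pitch c d <= p.+1)%N ->
  valid_for S c d -> c i 0 != 0 -> valid_for (face Q i) c d.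
Proof.
move=> S01 Q01 Q_pitch [c_ge0 d_ge0] pitch_le S_valid ci_neq0 x [Qx xi1].
rewrite (ineq_lhs_drop_coord c x i) xi1 mulr1.
have c'_ge0 j : 0 <= drop_coord c i j 0 by rewrite mxE; case: ifP.
have [d_le_ci|ci_lt_d] := lerP d (c i 0).
  by have := ineq_lhs_ge0 c'_ge0 (Q01 x Qx); lra.
have mono' : monotone_ineq (drop_coord c i) (d - c i 0) by split; rewrite ?subr_ge0 ?ltW.
have := Q_pitch _ _ mono' (pitch_drop_coord ci_neq0 pitch_le)
  (valid_for_drop_coord i c_ge0 S01 S_valid) x Qx.
lra.
Qed.

Lemma fset_of_unit_cube (f : mformula n) (x : pt) : fset_of f x -> unit_cube x.
Proof. by case=> x01 _ i; case: (x01 i) => ->; rewrite ?ler01 lexx. Qed.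

Lemma satisfies_pitch_fapply (f : mformula n) (Q : pt -> Prop) p :
  (forall x, Q x -> unit_cube x) ->
  satisfies_pitch Q (fset_of f) p -> satisfies_pitch (fapply f Q) (fset_of f) p.+1.
Proof.
move=> Q01 Q_pitch c d mono pitch_le S_valid; have [c_ge0 _] := mono.
have [d_le0|d_gt0] := lerP d 0.
  move=> x /(fapply_unit_cube Q01) x01.
  exact: le_trans d_le0 (ineq_lhs_ge0 c_ge0 x01).
apply: fapply_valid (fset_of_transversal d_gt0 S_valid) => i.
exact: face_valid (@fset_of_unit_cube f) Q01 Q_pitch mono pitch_le S_valid.
Qed.

End Pitch.

Section MatrixEntries.
Variable R : realFieldType.

Lemma mxE_zero p q i j : (0 : 'M[R]_(p, q)) i j = 0.
Proof. by rewrite mxE. Qed.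

Lemma mxE_add p q (X Y : 'M[R]_(p, q)) i j : (X + Y) i j = X i j + Y i j.
Proof. by rewrite mxE. Qed.

Lemma mxE_scale p q c (X : 'M[R]_(p, q)) i j : (c *: X) i j = c * X i j.
Proof. by rewrite mxE. Qed.

Lemma mxE_opp p q (X : 'M[R]_(p, q)) i j : (- X) i j = - X i j.
Proof. by rewrite mxE. Qed.

Lemma mulmx_line_entry p d (M : 'M[R]_(p, d)) (u v : 'cV[R]_d) (c : R) i :
  (M *m (u + c *: v)) i 0 = (M *m u) i 0 + c * (M *m v) i 0.
Proof. by rewrite mulmxDr -scalemxAr mxE_add mxE_scale. Qed.

Lemma mulmx_comb p d k (M : 'M[R]_(p, d)) (lam : 'I_k -> R) (vs : 'I_k -> 'cV[R]_d) :
  M *m (\sum_j lam j *: vs j) = \sum_j lam j *: (M *m vs j).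
Proof. by rewrite mulmx_sumr; apply: eq_bigr => j _; rewrite scalemxAr. Qed.

Lemma mul_row_col_scalar p d (M : 'M[R]_(p, d)) (c : 'cV[R]_p) (y : 'cV[R]_d)
    (s : 'cV[R]_1) :
  row_mx M c *m col_mx y s = M *m y + s 0 0 *: c.
Proof.
rewrite mul_row_col; congr (_ + _); apply/matrixP => r j.
by rewrite (ord1 j) !mxE big_ord1 mulrC.
Qed.

Lemma mx11_entry_eq (u v : 'M[R]_1) : u = v <-> u 0 0 = v 0 0.
Proof. by split => [->//|uv]; rewrite [u]mx11_scalar [v]mx11_scalar uv. Qed.

Lemma mul_row_col_entry D1 D2 (S1 : 'rV[R]_D1) (S2 : 'rV[R]_D2)
    (v1 : 'cV[R]_D1) (v2 : 'cV[R]_D2) :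
  (row_mx S1 S2 *m col_mx v1 v2) 0 0 = (S1 *m v1) 0 0 + (S2 *m v2) 0 0.
Proof. by rewrite mul_row_col mxE_add. Qed.

End MatrixEntries.

Section Polyhedron.
Variables (R : realFieldType) (n m d : nat) (A : 'M[R]_(m, d)) (b : 'cV[R]_m)
  (T : 'M[R]_(n, d)) (t : 'cV[R]_n).

Definition feasible (y : 'cV[R]_d) := forall k, b k 0 <= (A *m y) k 0.

Definition tight (y : 'cV[R]_d) : {set 'I_m} := [set k | (A *m y) k 0 == b k 0].

Lemma feasible_conv k (lam : 'I_k -> R) (ys : 'I_k -> 'cV[R]_d) :
  (forall j, 0 <= lam j) -> \sum_j lam j = 1 -> (forall j, feasible (ys j)) ->
  feasible (\sum_j lam j *: ys j).
Proof.
move=> lam_ge0 lam_sum Fys r.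
rewrite mulmx_comb summxE -[b r 0]mul1r -lam_sum mulr_suml.
by apply: ler_sum => j _; rewrite mxE_scale; apply/ler_wpM2l/Fys.
Qed.

Lemma affine_comb k (lam : 'I_k -> R) (ys : 'I_k -> 'cV[R]_d) :
  \sum_j lam j = 1 ->
  \sum_j lam j *: (T *m ys j + t) = T *m (\sum_j lam j *: ys j) + t.
Proof.
move=> lam_sum; rewrite mulmx_comb; under eq_bigr => j _ do rewrite scalerDr.
by rewrite big_split /= -scaler_suml lam_sum scale1r.
Qed.

Hypothesis bounded : forall y, feasible y -> unit_cube (T *m y + t).

(* A nonzero image [T w] of a recession direction [w] would carry the
   bounded image [T y + t] arbitrarily far. *)
Lemma recession_image (y w : 'cV[R]_d) :
  feasible y -> (forall k, 0 <= (A *m w) k 0) -> T *m w = 0.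
Proof.
move=> Fy Aw_ge0; apply/matrixP => r j; rewrite ord1 [RHS]mxE.
set a := (T *m w) r 0.
have bnd mu : 0 <= mu -> 0 <= (T *m y) r 0 + mu * a + t r 0 <= 1.
  move=> mu_ge0; rewrite -(mulmx_line_entry T) -mxE_add; apply: bounded => k.
  by rewrite mulmx_line_entry -[b k 0]addr0 lerD ?mulr_ge0.
have := bnd 0 (lexx _); rewrite mul0r addr0 => bnd0.
have [a_lt0|a_gt0|//] := ltrgtP a 0.
- have : a^-1 < 0 by rewrite invr_lt0.
  by move: (bnd (- 2 / a)); rewrite divfK ?lt_eqF //; lra.
- have : 0 < a^-1 by rewrite invr_gt0.
  by move: (bnd (2 / a)); rewrite divfK ?gt_eqF //; lra.
Qed.

(* For [s < 0], [y / -s] plus any feasible point is a recession direction, so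
   [T] would be constant on the feasible set. *)
Lemma homogenized_nonneg (ya yb y : 'cV[R]_d) s :
  feasible ya -> feasible yb -> T *m ya != T *m yb ->
  (forall k, s * b k 0 <= (A *m y) k 0) -> 0 <= s.
Proof.
move=> Fya Fyb Tab_neq Ay_ge; rewrite leNgt; apply/negP => s_lt0.
have inv_gt0 : 0 < (- s)^-1 by rewrite invr_gt0 oppr_gt0.
have Tconst y' : feasible y' -> T *m y' = - ((- s)^-1 *: (T *m y)).
  move=> Fy'; apply/eqP; rewrite -addr_eq0 scalemxAr -mulmxDr; apply/eqP.
  apply: (recession_image Fy') => k; rewrite mulmx_line_entry.
  have := ler_wpM2l (ltW inv_gt0) (Ay_ge k).
  have -> : (- s)^-1 * (s * b k 0) = - b k 0 by field; rewrite lt_eqF.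
  by have := Fy' k; lra.
by move: Tab_neq; rewrite (Tconst _ Fya) (Tconst _ Fyb) eqxx.
Qed.

Lemma tighten_along (y w : 'cV[R]_d) : feasible y -> T *m w != 0 ->
  (forall k, k \in tight y -> (A *m w) k 0 = 0) ->
  exists2 mu, 0 < mu & feasible (y + mu *: w) /\ tight y \proper tight (y + mu *: w).
Proof.
move=> Fy Tw_neq0 Aw_tight.
have [k0 Awk0_lt0] : exists k, (A *m w) k 0 < 0.
  apply/existsP; apply: contraR Tw_neq0 => /existsPn Aw_ge0.
  by apply/eqP/(recession_image Fy) => k; rewrite leNgt Aw_ge0.
pose step k := ((A *m y) k 0 - b k 0) / - (A *m w) k 0.
have [ks Awks_lt0 ks_min] := @arg_minP _ R _ k0 [pred k | (A *m w) k 0 < 0] step Awk0_lt0.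
have slack : 0 < (A *m y) ks 0 - b ks 0.
  rewrite subr_gt0 lt_def Fy andbT eq_sym; apply/eqP => tks; move: Awks_lt0.
  by rewrite inE Aw_tight ?ltxx // inE tks.
have step_gt0 : 0 < step ks by apply: divr_gt0; rewrite // oppr_gt0.
exists (step ks) => //; split.
- move=> k; rewrite mulmx_line_entry; have [Awk_ge0|Awk_lt0] := lerP 0 ((A *m w) k 0).
    by rewrite -[b k 0]addr0; apply: lerD; [exact: Fy | exact: mulr_ge0 (ltW step_gt0) _].
  have Awk_neg : 0 < - (A *m w) k 0 by rewrite oppr_gt0.
  have : step k * - (A *m w) k 0 = (A *m y) k 0 - b k 0 by rewrite divfK ?gt_eqF.
  by have := ler_wpM2r (ltW Awk_neg) (ks_min k Awk_lt0); lra.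
- apply/properP; split.
    apply/subsetP => k; rewrite !inE mulmx_line_entry => /eqP tk.
    by rewrite Aw_tight ?inE ?tk // mulr0 addr0.
  exists ks; last by rewrite inE -subr_eq0 gt_eqF.
  rewrite inE mulmx_line_entry /step; apply/eqP.
  by field; rewrite lt_eqF.
Qed.

Lemma split_segment (y y' : 'cV[R]_d) : feasible y -> feasible y' ->
  tight y \subset tight y' -> T *m y' != T *m y ->
  exists y1 y2 a, [/\ feasible y1 /\ tight y \proper tight y1,
    feasible y2 /\ tight y \proper tight y2, 0 <= a <= 1
    & T *m y + t = a *: (T *m y1 + t) + (1 - a) *: (T *m y2 + t)].
Proof.
move=> Fy Fy' /subsetP tight_sub Ty'_neq; pose w := y' - y.
have Aw_tight k : k \in tight y -> (A *m w) k 0 = 0.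
  move=> ky; have := tight_sub k ky; move: ky; rewrite !inE => /eqP t1 /eqP t2.
  by rewrite mulmxBr mxE_add mxE_opp t1 t2 subrr.
have Aw'_tight k : k \in tight y -> (A *m - w) k 0 = 0.
  by move=> ky; rewrite mulmxN mxE_opp Aw_tight ?oppr0.
have Tw_neq0 : T *m w != 0 by rewrite mulmxBr subr_eq0.
have Tw'_neq0 : T *m - w != 0 by rewrite mulmxN oppr_eq0.
have [mu1 mu1_gt0 [F1 P1]] := tighten_along Fy Tw_neq0 Aw_tight.
have [mu2 mu2_gt0 [F2 P2]] := tighten_along Fy Tw'_neq0 Aw'_tight.
exists (y + mu1 *: w), (y + mu2 *: - w), (mu2 / (mu1 + mu2)); split => //.
  rewrite divr_ge0 ?ler_pdivrMr /=; lra.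
apply/matrixP => i j; rewrite ord1 !(mxE_add, mxE_scale) !mulmx_line_entry mulmxN mxE_opp.
by field; lra.
Qed.

Lemma tight_representatives : (exists y0, feasible y0) ->
  exists yI : {set 'I_m} -> 'cV[R]_d, forall I, feasible (yI I) /\
    forall y, feasible y -> I \subset tight y -> I \subset tight (yI I).
Proof.
move=> [y0 Fy0].
suff rep (I : {set 'I_m}) : exists yI, feasible yI /\
    forall y, feasible y -> I \subset tight y -> I \subset tight yI.
  by have [yI yIP] := fin_all_exists rep; exists yI.
have [[y [Fy I_sub]]|none] := classic (exists y, feasible y /\ I \subset tight y).
  by exists y.
by exists y0; split => // y Fy I_sub; case: none; exists y.
Qed.

(* Induction on the number of slack constraints: a point is either the only
   image of its minimal face, or splits along a segment whose two ends have
   strictly more tight constraints. *)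
Lemma feasible_image_vertices : exists k (pts : 'I_k -> 'cV[R]_n),
  (forall j, exists2 y, feasible y & pts j = T *m y + t) /\
  forall y, feasible y -> conv (fun z => exists j, z = pts j) (T *m y + t).
Proof.
have [feas|infeas] := classic (exists y0, feasible y0); last first.
  exists 0%N, (fun _ => 0); split => [[]//|y Fy].
  by case: infeas; exists y.
have [yI yIP] := tight_representatives feas.
pose pts (j : 'I_#|{: {set 'I_m}}|) := T *m yI (enum_val j) + t.
exists _, pts; split.
  by move=> j; exists (yI (enum_val j)); [case: (yIP (enum_val j)) | ].
suff conv_pts N y : feasible y -> (#|~: tight y| < N)%N ->
    conv (fun z => exists j, z = pts j) (T *m y + t).
  by move=> y Fy; apply: (conv_pts (#|~: tight y|).+1).
elim: N y => [//|N IH] y Fy slack_lt.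
have [[y' [Fy' sub neq]]|alone] :=
  classic (exists y', [/\ feasible y', tight y \subset tight y' & T *m y' != T *m y]).
  have [y1 [y2 [a [[F1 P1] [F2 P2] a01 ->]]]] := split_segment Fy Fy' sub neq.
  have slackP y'' : tight y \proper tight y'' -> (#|~: tight y''| < N)%N.
    move=> /proper_card lt; move: (cardsC (tight y)) (cardsC (tight y'')); lia.
  by apply: conv_convex a01; apply: IH; rewrite ?slackP.
apply: conv_sub; exists (enum_rank (tight y)); rewrite /pts enum_rankK.
have [FyI /(_ y Fy (subxx _)) sub_yI] := yIP (tight y).
congr (_ + _); apply/eqP; apply: contraT => neq; case: alone.
by exists (yI (tight y)); split; rewrite // eq_sym.
Qed.

End Polyhedron.

Lemma ext_formulation_polytope (R : realFieldType) n (P : 'cV[R]_n -> Prop) m :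
  (forall x, P x -> unit_cube x) -> ext_formulation P m -> polytope P.
Proof.
move=> P01 [d [A [b [T [t P_ext]]]]].
have bounded y : feasible A b y -> unit_cube (T *m y + t).
  by move=> Fy; apply/P01/P_ext; exists y.
have [k [pts [ptsP conv_pts]]] := feasible_image_vertices bounded.
exists k, pts => x; split; first by case/P_ext => y [Fy ->]; apply: conv_pts.
case=> k' [lam [pts' [lam_ge0 lam_sum pts'P ->]]].
have pre j : exists y, feasible A b y /\ pts' j = T *m y + t.
  by have [j' ->] := pts'P j; have [y] := ptsP j'; exists y.
have [ys ysP] := fin_all_exists pre.
apply/P_ext; exists (\sum_j lam j *: ys j); split.
  by apply: feasible_conv => // j; case: (ysP j).
by rewrite -affine_comb //; apply: eq_bigr => j _; case: (ysP j) => _ ->.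
Qed.

Section Kernel.
Variable R : fieldType.

Lemma mulmx_kernel p q (M : 'M[R]_(p, q)) : M *m (kermx M^T)^T = 0.
Proof. by rewrite -[M in M *m _]trmxK -trmx_mul mulmx_ker trmx0. Qed.

Lemma kernel_param p q (M : 'M[R]_(p, q)) (w : 'cV[R]_q) :
  M *m w = 0 -> exists z, w = (kermx M^T)^T *m z.
Proof.
move=> Mw; have /sub_kermxP/submxP [z wz] : w^T *m M^T = 0 by rewrite -trmx_mul Mw trmx0.
by exists z^T; rewrite -[w]trmxK wz trmx_mul.
Qed.

End Kernel.

Section ConeRepresentation.
Variables (R : realFieldType) (n : nat).
Local Notation pt := 'cV[R]_n.

Definition in_cone D e m (G : 'M[R]_(m, D)) (E : 'M[R]_(e, D)) (v : 'cV[R]_D) :=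
  E *m v = 0 /\ forall k, 0 <= (G *m v) k 0.

(* [P] is the slice [S v = 1] of the image under [X] of the polyhedral cone
   [E v = 0, G v >= 0], whose directions with [S v = 0] are mapped to 0.  Only
   the [m] rows of [G] are counted: the equations can be eliminated. *)
Definition cone_rep (P : pt -> Prop) (m : nat) : Prop :=
  exists D e (G : 'M[R]_(m, D)) (E : 'M[R]_(e, D)) (X : 'M[R]_(n, D)) (S : 'rV[R]_D),
  (forall v, in_cone G E v ->
     [/\ 0 <= (S *m v) 0 0, ((S *m v) 0 0 = 0 -> X *m v = 0)
       & (0 < (S *m v) 0 0 -> P (((S *m v) 0 0)^-1 *: (X *m v)))]) /\
  (forall x, P x -> exists v, [/\ in_cone G E v, (S *m v) 0 0 = 1 & X *m v = x]).

Lemma in_cone0 D e m (G : 'M[R]_(m, D)) (E : 'M[R]_(e, D)) : in_cone G E 0.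
Proof. by split => [|k]; rewrite mulmx0 // mxE_zero. Qed.

Lemma in_cone_comb D e m (G : 'M[R]_(m, D)) (E : 'M[R]_(e, D)) k
    (lam : 'I_k -> R) (vs : 'I_k -> 'cV[R]_D) :
  (forall j, 0 <= lam j) -> (forall j, in_cone G E (vs j)) ->
  in_cone G E (\sum_j lam j *: vs j).
Proof.
move=> lam_ge0 vsP; split.
  by rewrite mulmx_comb big1 // => j _; case: (vsP j) => -> _; rewrite scaler0.
move=> r; rewrite mulmx_comb summxE; apply: sumr_ge0 => j _.
by rewrite mxE_scale mulr_ge0 //; case: (vsP j).
Qed.

Lemma in_cone_block D1 D2 e1 e2 m1 m2 (G1 : 'M[R]_(m1, D1)) (G2 : 'M[R]_(m2, D2))
    (E1 : 'M[R]_(e1, D1)) (E2 : 'M[R]_(e2, D2)) v1 v2 :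
  in_cone (block_mx G1 0 0 G2) (block_mx E1 0 0 E2) (col_mx v1 v2) <->
  in_cone G1 E1 v1 /\ in_cone G2 E2 v2.
Proof.
rewrite /in_cone !mul_block_col !mul0mx !addr0 !add0r; split.
  case=> /eqP; rewrite col_mx_eq0 => /andP [/eqP E1v /eqP E2v] Gv.
  split; split=> // k.
    by move: (Gv (lshift m2 k)); rewrite col_mxEu.
  by move: (Gv (rshift m1 k)); rewrite col_mxEd.
case=> [[-> G1v] [-> G2v]]; split; first by apply/eqP; rewrite col_mx_eq0 !eqxx.
by move=> k; case: (split_ordP k) => k' ->; rewrite ?col_mxEu ?col_mxEd.
Qed.

Lemma cone_rep_meet (P1 P2 : pt -> Prop) m1 m2 :
  cone_rep P1 m1 -> cone_rep P2 m2 -> cone_rep (fun x => P1 x /\ P2 x) (m1 + m2).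
Proof.
move=> [D1 [e1 [G1 [E1 [X1 [S1 [F1 C1]]]]]]] [D2 [e2 [G2 [E2 [X2 [S2 [F2 C2]]]]]]].
pose E := col_mx (block_mx E1 0 0 E2) (col_mx (row_mx X1 (- X2)) (row_mx S1 (- S2))).
exists (D1 + D2)%N, (e1 + e2 + (n + 1))%N, (block_mx G1 0 0 G2), E,
  (row_mx X1 0), (row_mx S1 0).
have coneE v1 v2 : in_cone (block_mx G1 0 0 G2) E (col_mx v1 v2) <->
    [/\ in_cone G1 E1 v1, in_cone G2 E2 v2, X1 *m v1 = X2 *m v2 & S1 *m v1 = S2 *m v2].
  rewrite /E; split.
    case=> /eqP; rewrite mul_col_mx col_mx_eq0 => /andP [/eqP Ebv /eqP Exv] Gv.
    have /in_cone_block [c1 c2] : in_cone (block_mx G1 0 0 G2) (block_mx E1 0 0 E2)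
      (col_mx v1 v2) by [].
    move/eqP: Exv; rewrite mul_col_mx !mul_row_col !mulNmx col_mx_eq0 !subr_eq0.
    by case/andP => /eqP X12 /eqP S12.
  case=> c1 c2 X12 S12; have [Ebv Gv] := iffRL (in_cone_block _ _ _ _ _ _) (conj c1 c2).
  split=> //; apply/eqP.
  by rewrite mul_col_mx Ebv mul_col_mx !mul_row_col !mulNmx X12 S12 !subrr !col_mx_eq0 !eqxx.
split.
  move=> v; rewrite -(vsubmxK v) => /coneE [Fv1 Fv2 X12 S12].
  rewrite !mul_row_col !mul0mx !addr0.
  case: (F1 _ Fv1) => s_ge0 s0 s_gt0; case: (F2 _ Fv2); rewrite -X12 -S12 => _ _ s_gt0'.
  by split => // pos; split; [exact: s_gt0 | exact: s_gt0'].
move=> x [/C1 [v1 [Fv1 S1v X1v]] /C2 [v2 [Fv2 S2v X2v]]].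
exists (col_mx v1 v2); split.
- by apply/coneE; split; rewrite // ?X1v ?X2v // mx11_entry_eq S1v S2v.
- by rewrite mul_row_col mul0mx addr0.
- by rewrite mul_row_col mul0mx addr0.
Qed.

Lemma cone_rep_hull (P1 P2 : pt -> Prop) m1 m2 :
  cone_rep P1 m1 -> cone_rep P2 m2 ->
  cone_rep (conv (fun x => P1 x \/ P2 x)) (m1 + m2).
Proof.
move=> [D1 [e1 [G1 [E1 [X1 [S1 [F1 C1]]]]]]] [D2 [e2 [G2 [E2 [X2 [S2 [F2 C2]]]]]]].
exists (D1 + D2)%N, (e1 + e2)%N, (block_mx G1 0 0 G2), (block_mx E1 0 0 E2),
  (row_mx X1 X2), (row_mx S1 S2).
split.
  move=> v; rewrite -(vsubmxK v) => /in_cone_block [Fv1 Fv2].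
  rewrite mul_row_col_entry mul_row_col.
  have [s1_ge0 s1_0 s1_gt0] := F1 _ Fv1; have [s2_ge0 s2_0 s2_gt0] := F2 _ Fv2.
  set s1 := (S1 *m _) 0 0 in s1_ge0 s1_0 s1_gt0 *.
  set s2 := (S2 *m _) 0 0 in s2_ge0 s2_0 s2_gt0 *.
  split; first by rewrite addr_ge0.
    by move=> s0; rewrite s1_0 ?s2_0 ?addr0 //; lra.
  move=> s_gt0; apply: conv_scaled_sum => // [pos|pos].
    by left; apply: s1_gt0.
  by right; apply: s2_gt0.
move=> _ [k [lam [pts [lam_ge0 lam_sum ptsP ->]]]].
have lift j : exists v, [/\ in_cone (block_mx G1 0 0 G2) (block_mx E1 0 0 E2) v,
    (row_mx S1 S2 *m v) 0 0 = 1 & row_mx X1 X2 *m v = pts j].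
  case: (ptsP j) => [/C1 [v1 [Fv1 Sv Xv]] | /C2 [v2 [Fv2 Sv Xv]]].
    exists (col_mx v1 0); split; first exact/in_cone_block/(conj Fv1 (in_cone0 _ _)).
      by rewrite mul_row_col_entry mulmx0 mxE_zero addr0.
    by rewrite mul_row_col mulmx0 addr0.
  exists (col_mx 0 v2); split; first exact/in_cone_block/(conj (in_cone0 _ _) Fv2).
    by rewrite mul_row_col_entry mulmx0 mxE_zero add0r.
  by rewrite mul_row_col mulmx0 add0r.
have [vs vsP] := fin_all_exists lift.
exists (\sum_j lam j *: vs j); split.
- by apply: in_cone_comb => // j; case: (vsP j).
- rewrite mulmx_comb summxE -lam_sum; apply: eq_bigr => j _.
  by rewrite mxE_scale; case: (vsP j) => _ -> _; rewrite mulr1.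
- by rewrite mulmx_comb; apply: eq_bigr => j _; case: (vsP j) => _ _ ->.
Qed.

Lemma cone_rep_face (P : pt -> Prop) m i :
  cone_rep P m -> cone_rep (fun x => P x /\ x i 0 = 1) m.
Proof.
move=> [D [e [G [E [X [S [F C]]]]]]].
exists D, (e + 1)%N, G, (col_mx E (row i X - S)), X, S.
have coneE v : in_cone G (col_mx E (row i X - S)) v <->
    in_cone G E v /\ (X *m v) i 0 = (S *m v) 0 0.
  have rowE : ((row i X - S) *m v) 0 0 = (X *m v) i 0 - (S *m v) 0 0.
    by rewrite mulmxBl mxE_add mxE_opp -row_mul mxE.
  rewrite /in_cone mul_col_mx; split.
    case=> /eqP; rewrite col_mx_eq0 => /andP [/eqP Ev /eqP /mx11_entry_eq] + Gv.
    by rewrite rowE mxE_zero => /eqP; rewrite subr_eq0 => /eqP.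
  case=> [[Ev Gv] XS]; split=> //; apply/eqP; rewrite col_mx_eq0 Ev eqxx /=.
  by apply/eqP/mx11_entry_eq; rewrite rowE XS subrr mxE_zero.
split.
  move=> v /coneE [Fv XS]; have [s_ge0 s0 s_gt0] := F v Fv.
  split=> // pos; split; first exact: s_gt0.
  by rewrite mxE_scale XS mulVf ?gt_eqF.
move=> x [/C [v [Fv Sv Xv]] xi]; exists v; split=> //.
by apply/coneE; split; rewrite // Xv xi Sv.
Qed.

Lemma ext_formulation_of_cone_rep (P : pt -> Prop) m x0 :
  cone_rep P m -> P x0 -> ext_formulation P m.
Proof.
move=> [D [e [G [E [X [S [F C]]]]]]] /C [v1 [[Ev1 Gv1] Sv1 Xv1]].
pose M := col_mx E S; pose K := (kermx M^T)^T.
have [EK SK] : E *m K = 0 /\ S *m K = 0.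
  by have /eqP := mulmx_kernel M; rewrite mul_col_mx col_mx_eq0 => /andP [/eqP -> /eqP ->].
exists D, (G *m K), (- (G *m v1)), (X *m K), (X *m v1) => x; split.
  case/C => v [[Ev Gv] Sv <-].
  have [z Kz] : exists z, v - v1 = K *m z.
    apply: kernel_param; apply/eqP; rewrite mul_col_mx col_mx_eq0 !mulmxBr Ev Ev1 subrr eqxx.
    by apply/eqP/mx11_entry_eq; rewrite mxE_add mxE_opp Sv Sv1 subrr mxE_zero.
  exists z; rewrite -!mulmxA -Kz; split=> [k|]; last by rewrite mulmxBr subrK.
  by rewrite mxE_opp mulmxBr mxE_add mxE_opp; have := Gv k; lra.
case=> z [Gz ->]; pose v := v1 + K *m z.
have Fv : in_cone G E v.
  split; first by rewrite mulmxDr mulmxA EK mul0mx Ev1 addr0.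
  by move=> k; have := Gz k; rewrite mulmxDr mxE_add mulmxA mxE_opp; lra.
have Sv : (S *m v) 0 0 = 1 by rewrite mulmxDr mulmxA SK mul0mx addr0.
have [_ _] := F v Fv; rewrite Sv invr1 scale1r => /(_ ltr01).
by rewrite mulmxDr mulmxA addrC.
Qed.

Lemma cone_rep_of_ext_formulation (Q : pt -> Prop) sigma q0 q1 :
  (forall x, Q x -> unit_cube x) -> Q q0 -> Q q1 -> q0 != q1 ->
  ext_formulation Q sigma -> cone_rep Q sigma.
Proof.
move=> Q01 Qq0 Qq1 q01 [d [A [b [T [t Q_ext]]]]].
have bounded y : feasible A b y -> unit_cube (T *m y + t).
  by move=> Fy; apply/Q01/Q_ext; exists y.
pose S : 'rV[R]_(d + 1) := row_mx 0 (const_mx 1).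
exists (d + 1)%N, 0%N, (row_mx A (- b)), 0, (row_mx T t), S.
have Sv (y : 'cV[R]_d) (s : 'cV[R]_1) : (S *m col_mx y s) 0 0 = s 0 0.
  by rewrite mul_row_col mul0mx add0r mxE big_ord1 mxE mul1r.
split.
  move=> v; rewrite -(vsubmxK v) Sv mul_row_col_scalar.
  move: (usubmx v) (dsubmx v) => y s [_ Gv].
  have Ay_ge k : s 0 0 * b k 0 <= (A *m y) k 0.
    by have := Gv k; rewrite mul_row_col_scalar mxE_add mxE_scale mxE_opp; lra.
  have [ya [Fya q0E]] := iffLR (Q_ext q0) Qq0; have [yb [Fyb q1E]] := iffLR (Q_ext q1) Qq1.
  have Tab : T *m ya != T *m yb by apply: contraNneq q01 => Tab; rewrite q0E q1E Tab.
  split; first exact: (homogenized_nonneg bounded Fya Fyb Tab Ay_ge).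
    move=> s0; rewrite s0 scale0r addr0; apply: (recession_image bounded Fya) => k.
    by have := Ay_ge k; rewrite s0 mul0r.
  move=> s_gt0; apply/Q_ext; exists ((s 0 0)^-1 *: y); split.
    move=> k; rewrite -scalemxAr mxE_scale ler_pdivlMl //; exact: Ay_ge.
  by rewrite scalerDr scalerA mulVf ?gt_eqF // scale1r scalemxAr.
move=> x /Q_ext [y [Fy ->]]; exists (col_mx y (const_mx 1)).
have one00 : (const_mx 1 : 'cV[R]_1) 0 0 = 1 by rewrite mxE.
rewrite Sv mul_row_col_scalar one00 scale1r; split=> //; split=> [|k]; first by rewrite mul0mx.
by rewrite mul_row_col_scalar mxE_add mxE_scale mxE_opp one00 mul1r subr_ge0.
Qed.

Lemma cone_rep_fapply (f : mformula n) (Q : pt -> Prop) sigma :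
  cone_rep Q sigma -> cone_rep (fapply f Q) (fsize f * sigma).
Proof.
move=> Q_rep; elim: f => [i|f1 IH1 f2 IH2|f1 IH1 f2 IH2] /=.
- by rewrite mul1n; apply: cone_rep_face.
- by rewrite mulnDl; apply: cone_rep_meet.
- by rewrite mulnDl; apply: cone_rep_hull.
Qed.

End ConeRepresentation.

Section AllOnes.
Variables (R : realFieldType) (n : nat).
Local Notation pt := 'cV[R]_n.
Local Notation one := (const_mx 1 : pt).

Lemma fset_of_one (f : mformula n) : fset_of f one.
Proof.
split=> [i|]; first by right; rewrite mxE.
rewrite (eq_feval _ (b2 := fun _ => true)) => [|i]; last by rewrite mxE eqxx.
by elim: f => //= f1 -> f2 ->.
Qed.

Lemma fapply_one (f : mformula n) (Q : pt -> Prop) : Q one -> fapply f Q one.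
Proof.
move=> Q1; elim: f => [i|f1 IH1 f2 IH2|f1 IH1 f2 IH2] /=.
- by split; rewrite ?mxE.
- by split.
- by apply: conv_sub; left.
Qed.

Lemma fapply_singleton (f : mformula n) (Q : pt -> Prop) :
  (forall x, Q x <-> x = one) -> forall x, fapply f Q x <-> x = one.
Proof.
move=> QE; elim: f => [i|f1 IH1 f2 IH2|f1 IH1 f2 IH2] x /=.
- by rewrite QE; split=> [[]//|->]; rewrite mxE.
- by rewrite IH1 IH2; split=> [[]//|->].
- by apply: conv_singleton => y; rewrite IH1 IH2; split=> [[]|->]; last left.
Qed.

End AllOnes.

Lemma polytope_singleton (R : realFieldType) n (P : 'cV[R]_n -> Prop) c :
  (forall x, P x <-> x = c) -> polytope P.
Proof.
move=> PE; exists 1%N, (fun _ => c) => x; rewrite PE.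
by symmetry; apply: conv_singleton => y; split=> [[]|->] //; exists ord0.
Qed.

Lemma ext_formulation_singleton (R : realFieldType) n (P : 'cV[R]_n -> Prop) c m :
  (forall x, P x <-> x = c) -> ext_formulation P m.
Proof.
move=> PE; exists 0%N, 0, 0, 0, c => x; rewrite PE; split.
  by move=> ->; exists 0; rewrite !mul0mx add0r; split=> // k; rewrite !mxE_zero.
by case=> y [_ ->]; rewrite mul0mx add0r.
Qed.

Unset Implicit Arguments.

Theorem theorem4p3 (R : realFieldType) (n : nat) (phi : mformula n)
    (Q : 'cV[R]_n -> Prop) (p : nat) :
  convex Q ->
  (forall x, Q x -> unit_cube x) ->
  (forall x, fset_of phi x -> Q x) ->
  (satisfies_pitch Q (fset_of phi) p ->
     satisfies_pitch (fapply phi Q) (fset_of phi) p.+1) /\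
  (forall sigma : nat, polytope Q -> ext_formulation Q sigma ->
     polytope (fapply phi Q) /\
     ext_formulation (fapply phi Q) (fsize phi * sigma)).
Proof.
move=> _ Q01 SQ; split; first exact: satisfies_pitch_fapply.
move=> sigma _ extQ.
have Q1 : Q (const_mx 1) := SQ _ (fset_of_one _ phi).
(* Homogenizing the formulation of [Q] needs two distinct points of [Q]. *)
have [[q [Qq q_neq1]]|Q_single] := classic (exists q, Q q /\ q != const_mx 1).
  have ext_phi : ext_formulation (fapply phi Q) (fsize phi * sigma).
    apply: ext_formulation_of_cone_rep (fapply_one phi Q1).
    exact/cone_rep_fapply/(cone_rep_of_ext_formulation Q01 Qq Q1 q_neq1 extQ).
  by split=> //; apply: ext_formulation_polytope ext_phi; apply: fapply_unit_cube.
have QE x : Q x <-> x = const_mx 1.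
  split=> [Qx|->//]; apply/eqP; apply: contraT => neq1.
  by case: Q_single; exists x.
have phiE := fapply_singleton phi QE.
by split; [exact: polytope_singleton phiE | exact: ext_formulation_singleton phiE].
Qed.
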